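(* Let $g,h$ be formal letters with $g\not\equiv h$. For every $n\ge1$, every cyclic subword of the iterated commutator word $[g,h]_n$ of length at least four is magic in $g$ and $h$.
   Context: Iterated commutator words in the free group on $g,h$: $[g,h]_1:=gh^{-1}g^{-1}h$, and for $n\ge 2$, $[g,h]_n$ is the reduced form of $g\,[g,h]_{n-1}^{-1}\,g^{-1}\,[g,h]_{n-1}$. A cyclic permutation of a word $a_1\cdots a_n$ is a word $a_k\cdots a_na_1\cdots a_{k-1}$ for some $k\in[n]$. A word $u$ is a cyclic subword of $w$ if $u$ or $u^{-1}$ is a contiguous subword of some cyclic permutation of $w$; a linear subword is a contiguous subword. A word $u$ is magic in $g$ and $h$ if $u$ and $u^{-1}$ together contain at least three of the four words $gh$, $hg$, $g^{-1}h$, $hg^{-1}$ as linear subwords. *)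

From HB Require Import structures.
From mathcomp Require Import all_boot.
Set Implicit Arguments. Unset Strict Implicit. Unset Printing Implicit Defensive.

(* Letters g, g^-1, h, h^-1 (g and h are distinct formal letters). *)
Inductive letter := Lg | Lgi | Lh | Lhi.

Definition letter_code (x : letter) : nat :=
  match x with Lg => 0 | Lgi => 1 | Lh => 2 | Lhi => 3 end.
Definition letter_decode (n : nat) : letter :=
  match n with 0 => Lg | 1 => Lgi | 2 => Lh | _ => Lhi end.
Lemma letter_codeK : cancel letter_code letter_decode.
Proof. by case. Qed.
HB.instance Definition _ := Equality.copy letter (can_type letter_codeK).

Definition inv_letter (x : letter) : letter :=
  match x with Lg => Lgi | Lgi => Lg | Lh => Lhi | Lhi => Lh end.

Definition word := seq letter.

Definition inv_word (w : word) : word := rev (map inv_letter w).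

Definition reduce (w : word) : word :=
  foldr (fun x acc => match acc with
                      | y :: t => if y == inv_letter x then t else x :: acc
                      | [::] => [:: x]
                      end) [::] w.

Fixpoint comm (n : nat) : word :=
  match n with
  | 0 | 1 => [:: Lg; Lhi; Lgi; Lh]
  | (m.+1) as k => let c := comm m in
                   reduce ([:: Lg] ++ inv_word c ++ [:: Lgi] ++ c)
  end.

Definition linear_subword (u w : word) : bool := infix u w.

Definition cyclic_subword (u w : word) : Prop :=
  exists k, k < size w /\
    (linear_subword u (rot k w) \/ linear_subword (inv_word u) (rot k w)).

Definition magic_tests : seq word :=
  [:: [:: Lg; Lh]; [:: Lh; Lg]; [:: Lgi; Lh]; [:: Lh; Lgi]].

Definition magic (u : word) : Prop :=
  3 <= count (fun t => linear_subword t u || linear_subword t (inv_word u)) magic_tests.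

From mathcomp Require Import all_boot.

Set Implicit Arguments. Unset Strict Implicit. Unset Printing Implicit Defensive.

(* Cyclically, every [comm n] with [n >= 1] is an alternating word: its letters
   alternate between g^{+-1} and h^{+-1}, and so do the exponents of its
   successive h-letters.  Writing [comm n = g c] with [c = h^-1 ... h], the
   recursion gives [comm (n+1) = g c^-1 g^-1 c] after the single cancellation
   g^-1 g, and the pieces glue along the pattern h g^{+-1} h^-1, which keeps the
   word alternating.  Alternation passes to inverses and subwords, and an
   alternating word of length four, x h^e y h^-e or h^e x h^-e y, contains
   together with its inverse three of gh, hg, g^-1 h, h g^-1. *)

Section Infix.

Variable T : eqType.

Lemma infix_filter (p : pred T) (s1 s2 : seq T) :
  infix s1 s2 -> infix (filter p s1) (filter p s2).
Proof. by case/infixP=> [a [b ->]]; rewrite !filter_cat infix_infix. Qed.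

Lemma infix_map (U : eqType) (f : T -> U) (s1 s2 : seq T) :
  infix s1 s2 -> infix (map f s1) (map f s2).
Proof. by case/infixP=> [a [b ->]]; rewrite !map_cat infix_infix. Qed.

Lemma rot_infix_cat (k : nat) (s : seq T) : infix (rot k s) (s ++ s).
Proof.
have -> : s ++ s = take k s ++ rot k s ++ drop k s.
  by rewrite /rot -catA cat_take_drop catA cat_take_drop.
exact: infix_infix.
Qed.

End Infix.

Lemma inv_letterK : involutive inv_letter.
Proof. by case. Qed.

Lemma inv_word_cons x (w : word) :
  inv_word (x :: w) = rcons (inv_word w) (inv_letter x).
Proof. by rewrite /inv_word /= rev_cons. Qed.

Lemma inv_word_rcons (w : word) x :
  inv_word (rcons w x) = inv_letter x :: inv_word w.
Proof. by rewrite /inv_word map_rcons rev_rcons. Qed.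

Lemma infix_inv_word (u w : word) :
  infix u w -> infix (inv_word u) (inv_word w).
Proof. by move=> /(infix_map inv_letter); rewrite -infix_rev. Qed.

Definition reduced (w : word) : bool := sorted (fun x y => y != inv_letter x) w.

Definition reduce_step (x : letter) (w : word) : word :=
  if w is y :: t then if y == inv_letter x then t else x :: w else [:: x].

Lemma reduceE (w : word) : reduce w = foldr reduce_step [::] w.
Proof. by []. Qed.

Lemma reduce_reduced (w : word) : reduced (reduce w).
Proof.
elim: w => //= x w; rewrite -/(reduce w).
case: (reduce w) => [|y t] //= red_yt.
by case: eqP => [_ | /eqP ne]; [exact: path_sorted red_yt | rewrite /= ne].
Qed.

Lemma reduced_reduce (w : word) : reduced w -> reduce w = w.
Proof.
elim: w => //= x w IH red_xw; rewrite -/(reduce w) IH; last exact: path_sorted red_xw.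
by case: w red_xw {IH} => [|y w] //= /andP [/negbTE -> _].
Qed.

Lemma reduce_cancel (a : word) x (b : word) :
  reduce (a ++ x :: inv_letter x :: b) = reduce (a ++ b).
Proof.
rewrite !reduceE !foldr_cat -!reduceE /=; congr foldr.
have := reduce_reduced b; case: (reduce b) => [|y t] /=.
  by rewrite eqxx.
rewrite inv_letterK; case: eqP => [-> | _ _]; last by rewrite eqxx.
by case: t => [|z t] //= /andP [/negbTE ->].
Qed.

Definition is_h (x : letter) : bool := match x with Lh | Lhi => true | _ => false end.

Lemma is_h_inv x : is_h (inv_letter x) = is_h x.
Proof. by case: x. Qed.

Definition other_kind : rel letter := fun x y => is_h x != is_h y.

Definition cancelling : rel letter := fun x y => y == inv_letter x.

Definition alternating (w : word) : bool :=
  sorted other_kind w && sorted cancelling (filter is_h w).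

Lemma alternating_infix (u w : word) : infix u w -> alternating w -> alternating u.
Proof.
move=> uw /andP [kind_w h_w]; apply/andP; split; first exact: infix_sorted kind_w.
exact: infix_sorted (infix_filter _ uw) h_w.
Qed.

Lemma alternating_inv (w : word) : alternating (inv_word w) = alternating w.
Proof.
rewrite /alternating /inv_word filter_rev filter_map !rev_sorted !sorted_map.
rewrite (@eq_filter _ (preim _ _) is_h); last exact: is_h_inv.
by congr andb; apply: eq_sorted; do 2 case.
Qed.

Lemma alternating_reduced (w : word) : alternating w -> reduced w.
Proof. by case/andP=> + _; apply: sub_sorted; do 2 case. Qed.

Lemma alternating_cons x y (b : word) :
  ~~ is_h x -> is_h y -> alternating (y :: b) -> alternating [:: x, y & b].
Proof. by move=> /negbTE gx hy; rewrite /alternating /= gx hy /other_kind gx hy. Qed.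

Lemma alternating_glue (a : word) x y (b : word) :
  ~~ is_h x -> is_h y -> alternating (rcons a y) -> alternating (inv_letter y :: b) ->
  alternating (rcons a y ++ [:: x, inv_letter y & b]).
Proof.
move=> /negbTE gx hy /andP [kind_a h_a] /andP [kind_b h_b].
have hy' : is_h (inv_letter y) by rewrite is_h_inv.
apply/andP; split.
  rewrite cat_rcons sorted_cat_cons kind_a /= {1 2}/other_kind gx hy hy'.
  exact: kind_b.
move: h_a; rewrite filter_cat !filter_rcons hy /= gx hy'.
rewrite cat_rcons sorted_cat_cons => -> /=.
by move: h_b; rewrite /= hy' /cancelling eqxx.
Qed.

Lemma magic_infix (u w : word) : infix u w -> magic u -> magic w.
Proof.
rewrite /magic /linear_subword => uw /leq_trans; apply.
apply: sub_count => t /orP [tu | tu].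
  by rewrite (infix_trans tu uw).
by rewrite (infix_trans tu (infix_inv_word uw)) orbT.
Qed.

Lemma alternating_magic4 a b c d :
  alternating [:: a; b; c; d] -> magic [:: a; b; c; d].
Proof. by case: a; case: b; case: c; case: d. Qed.

Lemma alternating_magic (u : word) : 4 <= size u -> alternating u -> magic u.
Proof.
case: u => [|a [|b [|c [|d u]]]] // _ alt_u.
apply: (@magic_infix [:: a; b; c; d]); first exact: (prefix_infix [:: a; b; c; d] u).
by apply: alternating_magic4; apply: alternating_infix alt_u; apply: prefix_infix.
Qed.

Lemma comm_rec n : comm n.+2 = reduce (Lg :: inv_word (comm n.+1) ++ Lgi :: comm n.+1).
Proof. by []. Qed.

Lemma comm_shape n :
  exists2 t, comm n.+1 = [:: Lg, Lhi & rcons t Lh] & alternating (Lhi :: rcons t Lh).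
Proof.
elim: n => [|n [t comm_t alt_c]]; first by exists [:: Lgi].
set c := Lhi :: rcons t Lh in comm_t alt_c.
have inv_c : inv_word c = Lhi :: rcons (inv_word t) Lh.
  by rewrite inv_word_cons inv_word_rcons.
have alt_comm : alternating (Lg :: inv_word c ++ Lgi :: c).
  rewrite inv_c; apply: alternating_cons => //.
  apply: (@alternating_glue (Lhi :: inv_word t) Lgi Lh (rcons t Lh)) => //.
  by rewrite rcons_cons -inv_c alternating_inv.
have body : Lhi :: rcons (rcons (inv_word t) Lh ++ [:: Lgi, Lhi & t]) Lh =
             inv_word c ++ Lgi :: c by rewrite inv_c rcons_cat.
exists (rcons (inv_word t) Lh ++ [:: Lgi, Lhi & t]); rewrite body.
  rewrite comm_rec comm_t inv_word_cons -cat_cons (reduce_cancel _ Lgi).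
  by rewrite cat_cons cat_rcons reduced_reduce // alternating_reduced.
exact: alternating_infix (infix_cons _ _) alt_comm.
Qed.

Lemma alternating_comm_comm n : 1 <= n -> alternating (comm n ++ comm n).
Proof.
case: n => // n _; have [t -> alt_c] := comm_shape n.
apply: alternating_cons => //.
exact: (@alternating_glue (Lhi :: t) Lg Lh (rcons t Lh)).
Qed.

Theorem lemma3p14 (n : nat) (u : word) :
  1 <= n -> 4 <= size u -> cyclic_subword u (comm n) -> magic u.
Proof.
move=> n_ge1 size_u [k [_ u_in_rot]]; apply: alternating_magic => //.
have alt_rot : alternating (rot k (comm n)).
  exact: alternating_infix (rot_infix_cat k _) (alternating_comm_comm n_ge1).
case: u_in_rot => /alternating_infix /(_ alt_rot) //.
by rewrite alternating_inv.
Qed.
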